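(* Let $m\ge2$ and $G=CK(2m-1)$. Every set of edges $B\subset E(G)$ of Class A is a blocker for the simple Hamiltonian paths of $G$.
   Context: $CK(2m-1)$ is the complete convex geometric graph on $2m-1$ points in convex position, labelled clockwise $0,\dots,2m-2$ (elements of $\mathbb{Z}_{2m-1}$; indices mod $2m-1$), with all segments as edges. A simple Hamiltonian path (SHP) is a path through all vertices whose edges pairwise do not cross; a blocker for SHPs is an edge set of smallest possible size (which is $m$) sharing an edge with every SHP. Class A (up to cyclic rotation $x\mapsto x+k$ of labels): sets consisting of the following edges, for integers $\alpha,\delta\ge0$ with $\alpha+\delta\le m-2$: (1) all edges of the boundary path $\langle\alpha,\alpha+1,\dots,m-\delta\rangle$; (2) the edges $[i-1-\epsilon_i,\,i+\epsilon_i]$, $1\le i\le\alpha$, with $\epsilon_1>\dots>\epsilon_\alpha>0$ and $\alpha-i+1\le\epsilon_i\le m-\delta-i-1$; (3) the edges $[m-j-\xi_j,\,m-j+1+\xi_j]$, $1\le j\le\delta$, with $\xi_1>\dots>\xi_\delta>0$ and $\delta+1-j\le\xi_j\le m-j-\alpha-1$; and in addition $\epsilon_1+\xi_1\le m-2$ (when $\alpha,\delta>0$). *)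

From mathcomp Require Import all_boot all_order all_algebra.
Set Implicit Arguments. Unset Strict Implicit. Unset Printing Implicit Defensive.
Import GRing.Theory Num.Theory.
Local Open Scope ring_scope.

(* Vertices of CK(N) with N = n.+1 points in convex position, labelled
   clockwise 0..n : the type 'I_n.+1.  For CK(2m-1) we take n = 2m-2. *)

Definition vmod (n : nat) (z : int) : 'I_n.+1 :=
  inord (absz (z %% (n.+1)%:Z)%Z).

Definition seg (n : nat) (a b : int) : {set 'I_n.+1} := [set vmod n a; vmod n b].

(* Two segments [a,b], [c,d] between points in convex position cross iff
   their four endpoints are distinct and exactly one of c,d lies strictly
   between a and b in the cyclic (= linear) order of the labels. *)
Definition cross (n : nat) (a b c d : 'I_n.+1) : bool :=
  let inside (x : 'I_n.+1) := (minn a b < x < maxn a b)%N in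
  [&& uniq [:: a; b; c; d] & inside c != inside d].

Definition path_pairs (n : nat) (p : seq 'I_n.+1) : seq ('I_n.+1 * 'I_n.+1) :=
  zip p (behead p).

Definition path_edges (n : nat) (p : seq 'I_n.+1) : {set {set 'I_n.+1}} :=
  [set:: [seq [set e.1; e.2] | e <- path_pairs p]].

Definition SHP (n : nat) (p : seq 'I_n.+1) : bool :=
  [&& uniq p, size p == n.+1 &
      all (fun e => all (fun f => ~~ cross e.1 e.2 f.1 f.2) (path_pairs p))
          (path_pairs p)].

Definition edge_set (n : nat) (B : {set {set 'I_n.+1}}) : Prop :=
  forall e, e \in B -> #|e| = 2%N.

Definition hits_all_SHP (n : nat) (B : {set {set 'I_n.+1}}) : Prop :=
  forall p : seq 'I_n.+1, SHP p -> exists2 e, e \in path_edges p & e \in B.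

Definition blocker (n : nat) (B : {set {set 'I_n.+1}}) : Prop :=
  [/\ edge_set B, hits_all_SHP B &
      forall B' : {set {set 'I_n.+1}}, edge_set B' -> hits_all_SHP B' -> (#|B| <= #|B'|)%N].

(* The Class A edge set with parameters alpha, delta, eps, xi (eps i, xi j
   meaningful for 1 <= i <= alpha, 1 <= j <= delta), rotated by k,
   in CK(2m-1) (vertex type 'I_(2m-2).+1). *)
Definition classA_set (m : nat) (k : int) (alpha delta : nat) (eps xi : nat -> nat)
  : {set {set 'I_(2 * m - 2).+1}} :=
  let E (a b : int) := seg (2 * m - 2) (a + k) (b + k) in
  [set:: [seq E j%:Z (j.+1)%N%:Z | j <- iota alpha (m - delta - alpha)]
      ++ [seq E (i%:Z - 1 - (eps i)%:Z) (i%:Z + (eps i)%:Z) | i <- iota 1 alpha]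
      ++ [seq E (m%:Z - j%:Z - (xi j)%:Z) (m%:Z - j%:Z + 1 + (xi j)%:Z)
         | j <- iota 1 delta]].

(* Class A membership (conditions of the paper, written over int to avoid
   truncated subtraction). *)
Definition classA (m : nat) (B : {set {set 'I_(2 * m - 2).+1}}) : Prop :=
  exists (k : int) (alpha delta : nat) (eps xi : nat -> nat),
    [/\ (alpha + delta <= m - 2)%N,
        (forall i, (1 <= i)%N -> (i < alpha)%N -> (eps i.+1 < eps i)%N) &
        (forall j, (1 <= j)%N -> (j < delta)%N -> (xi j.+1 < xi j)%N)] /\
    [/\
        (forall i, (1 <= i <= alpha)%N ->
           [/\ (0 < eps i)%N,
               alpha%:Z - i%:Z + 1 <= (eps i)%:Z &
               (eps i)%:Z <= m%:Z - delta%:Z - i%:Z - 1]),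
        (forall j, (1 <= j <= delta)%N ->
           [/\ (0 < xi j)%N,
               delta%:Z + 1 - j%:Z <= (xi j)%:Z &
               (xi j)%:Z <= m%:Z - j%:Z - alpha%:Z - 1]),
        ((0 < alpha)%N -> (0 < delta)%N -> (eps 1 + xi 1 <= m - 2)%N) &
        B = classA_set m k alpha delta eps xi].

(* The vertices visited by a simple Hamiltonian path in convex position always
   form an arc, so lifting the labels from Z_(2m-1) to Z turns the path into a
   walk that grows an integer interval by one at either end at each step.  Up to
   a shift and the mirror symmetry x |-> m - x, the walk starts at or left of
   alpha and its final interval reaches m - delta - 1 (otherwise its first or
   last step runs along the boundary path <alpha, ..., m - delta> of B).  A walk
   avoiding B never steps along the boundary path, so each new right end r is
   reached by a jump from the current left end x, after which the walk moves on
   to x - 1; hence the sums r + x do not increase as r grows.  For r = i + eps_i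
   the chord [i-1-eps_i, i+eps_i] of B forbids the values 2i-1 and 2i of r + x,
   which pushes the sum down to at most 0 near the left end; symmetrically the
   chords [m-j-xi_j, m-j+1+xi_j] push it up to at least 2 near the right end, a
   contradiction.  Minimality: the 2m-1 zigzag paths c, c+1, c-1, c+2, c-2, ...
   are simple and any edge lies on at most two of them, so a set of edges meeting
   all of them has at least m elements. *)

From mathcomp Require Import all_boot all_order all_algebra zify.
Set Implicit Arguments. Unset Strict Implicit. Unset Printing Implicit Defensive.
Import GRing.Theory Num.Theory.
Local Open Scope ring_scope.

(** * Residues modulo N *)

Definition congz (N x y : int) : Prop := exists c : int, x = y + c * N.

Lemma congz_refl N x : congz N x x.
Proof. by exists 0; lia. Qed.

Lemma mulz_cases (N d : int) : 0 < N ->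
  [\/ d * N = 0, d * N = N \/ d * N = - N, 2 * N <= d * N | d * N <= - (2 * N)].
Proof.
move=> N_gt0; have [d_le|[d_eq|d_ge]] : d <= -2 \/ -1 <= d <= 1 \/ 2 <= d by lia.
- apply: Or44; have : 2 * N <= - d * N by rewrite ler_pM2r //; lia.
  by rewrite mulNr; lia.
- have [->|[->|->]] : d = -1 \/ d = 0 \/ d = 1 by lia.
  + by apply: Or42; right; rewrite mulN1r.
  + by apply: Or41; rewrite mul0r.
  + by apply: Or42; left; rewrite mul1r.
- by apply: Or43; rewrite ler_pM2r.
Qed.

Lemma congz_window N a b : 0 < N -> congz N a b -> a - N < b < a + N -> a = b.
Proof. by move=> N_gt0 [c ->]; case: (mulz_cases c N_gt0); lia. Qed.

Definition zres (N z : int) : nat := absz (z %% N)%Z.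

Lemma zresE N z : 0 < N -> (zres N z)%:Z = (z %% N)%Z.
Proof. by move=> N_gt0; rewrite /zres gez0_abs // modz_ge0 // lt0r_neq0. Qed.

Lemma zres_lt N z : 0 < N -> (zres N z)%:Z < N.
Proof. by move=> N_gt0; rewrite zresE // ltz_pmod. Qed.

Lemma zres_congz N z : 0 < N -> congz N z (zres N z).
Proof. by move=> N_gt0; exists (z %/ N)%Z; rewrite zresE // addrC -divz_eq. Qed.

Lemma zresDmul N z c : zres N (z + c * N) = zres N z.
Proof. by rewrite /zres addrC modzMDl. Qed.

Lemma congz_zres N a b : congz N a b -> zres N a = zres N b.
Proof. by move=> [c ->]; rewrite zresDmul. Qed.

Lemma zres_small N z : 0 <= z < N -> (zres N z)%:Z = z.
Proof. by move=> z_bd; rewrite zresE ?modz_small //; lia. Qed.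

Lemma zres_eq_congz N a b : 0 < N -> zres N a = zres N b -> congz N a b.
Proof.
move=> N_gt0 eq_ab; have [c Ea] := zres_congz a N_gt0; have [d Eb] := zres_congz b N_gt0.
by exists (c - d); rewrite Ea Eb eq_ab mulrBl; lia.
Qed.

Lemma zres_inj_window N a b : 0 < N -> zres N a = zres N b ->
  a - N < b < a + N -> a = b.
Proof. by move=> N_gt0 /(zres_eq_congz N_gt0); apply: congz_window. Qed.

Lemma zres_lift N lo (x : nat) : 0 < N -> x%:Z < N ->
  exists2 y, lo <= y < lo + N & zres N y = x.
Proof.
move=> N_gt0 x_lt; exists (x%:Z - ((x%:Z - lo) %/ N)%Z * N).
  have := divz_eq (x%:Z - lo) N; have := ltz_pmod (x%:Z - lo) N_gt0.
  have := modz_ge0 (x%:Z - lo) (lt0r_neq0 N_gt0); lia.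
by rewrite -mulNr zresDmul; apply/eqP; rewrite -eqz_nat zres_small //; lia.
Qed.

Lemma zres_two_windows N Q z : 0 < N -> 0 <= z - Q * N < 2 * N ->
  (zres N z)%:Z = z - Q * N \/ (zres N z)%:Z = z - Q * N - N.
Proof.
move=> N_gt0 z_bd; rewrite -(zresDmul N z (- Q)) mulNr.
have [z_lt|z_ge] := ltrP (z - Q * N) N; first by left; rewrite zres_small //; lia.
by right; rewrite -(zresDmul N _ (-1)) zres_small; lia.
Qed.

(** * Arc walks *)

(* The lift to Z of a path whose visited vertices always form an arc. *)
Definition arc_walk (n : nat) (P lo hi : nat -> int) : Prop :=
  [/\ lo 0%N = P 0%N, hi 0%N = P 0%N &
      forall t, (t.+1 < n)%N ->
        (P t.+1 = hi t + 1 /\ hi t.+1 = hi t + 1 /\ lo t.+1 = lo t) \/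
        (P t.+1 = lo t - 1 /\ lo t.+1 = lo t - 1 /\ hi t.+1 = hi t)].

Section ArcWalk.
Variables (n : nat) (P lo hi : nat -> int).
Hypothesis walk : arc_walk n P lo hi.

Lemma arc_len t : (t < n)%N -> hi t - lo t = t%:Z.
Proof.
case: walk => lo0 hi0 step; elim: t => [|t IH] t_lt; first by lia.
by have := IH (ltnW t_lt); case: (step t t_lt); lia.
Qed.

Lemma arc_mono i t : (i <= t)%N -> (t < n)%N -> lo t <= lo i /\ hi i <= hi t.
Proof.
case: walk => _ _ step; elim: t => [|t IH] i_le t_lt.
  by move: i_le; rewrite leqn0 => /eqP ->; lia.
case: (ltngtP i t.+1) i_le => // [i_lt|->] _; last by lia.
by have := IH i_lt (ltnW t_lt); case: (step t t_lt); lia.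
Qed.

Lemma arc_end t : (t < n)%N -> P t = lo t \/ P t = hi t.
Proof. by case: walk => lo0 hi0 step; case: t => [|t] t_lt; [lia | case: (step t t_lt); lia]. Qed.

Lemma arc_in i t : (i <= t)%N -> (t < n)%N -> lo t <= P i <= hi t.
Proof.
move=> i_le t_lt; have i_lt : (i < n)%N by apply: leq_ltn_trans t_lt.
by have := arc_mono i_le t_lt; have := arc_end i_lt; have := arc_len i_lt; lia.
Qed.

Lemma arc_inj i t : (i < t)%N -> (t < n)%N -> P i <> P t.
Proof.
case: walk => _ _ step; case: t => // t i_lt t_lt.
by have := @arc_in i t i_lt (ltnW t_lt); case: (step t t_lt); lia.
Qed.

Lemma arc_reach t y : (t < n)%N -> hi 0%N < y <= hi t ->
  exists2 s : nat, (0 < s <= t)%N &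
    [/\ P s = y, hi s.-1 = y - 1, hi s = y & lo s = lo s.-1].
Proof.
case: walk => lo0 hi0 step; elim: t => [|t IH] t_lt y_bd; first by lia.
have [y_le|y_gt] := lerP y (hi t).
  have [s s_bd s_prop] := IH (ltnW t_lt) ltac:(lia).
  by exists s => //; lia.
by exists t.+1 => //=; case: (step t t_lt) => step_t; split; lia.
Qed.

Lemma arc_cover t y : (t < n)%N -> lo t <= y <= hi t -> exists2 i, (i <= t)%N & P i = y.
Proof.
case: walk => lo0 hi0 step; elim: t y => [|t IH] y t_lt y_bd; first by exists 0%N => //; lia.
have [y_in|y_out] : lo t <= y <= hi t \/ ~ (lo t <= y <= hi t) by lia.
  by have [i i_le Pi] := IH y (ltnW t_lt) y_in; exists i => //; apply: leqW.
by exists t.+1 => //; case: (step t t_lt); lia.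
Qed.

End ArcWalk.

Lemma arc_walk_shift n P lo hi (c : int) : arc_walk n P lo hi ->
  arc_walk n (fun t => P t + c) (fun t => lo t + c) (fun t => hi t + c).
Proof.
move=> [lo0 hi0 step]; split => /=; [by rewrite lo0 | by rewrite hi0 |].
by move=> t t_lt; case: (step t t_lt); lia.
Qed.

Lemma arc_walk_mirror n P lo hi (c : int) : arc_walk n P lo hi ->
  arc_walk n (fun t => c - P t) (fun t => c - hi t) (fun t => c - lo t).
Proof.
move=> [lo0 hi0 step]; split => /=; [by rewrite hi0 | by rewrite lo0 |].
by move=> t t_lt; case: (step t t_lt); lia.
Qed.

(** * Chords of Class A *)

Definition same_chord (N x y a b : int) : Prop :=
  (congz N x a /\ congz N y b) \/ (congz N x b /\ congz N y a).

Definition classA_chord (m al de : nat) (ep xi : nat -> nat) (x y : int) : Prop :=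
  let N := (2 * m - 1)%N%:Z in
  [\/ exists2 j : int, al%:Z <= j < m%:Z - de%:Z & same_chord N x y j (j + 1),
      exists2 i : nat, (1 <= i <= al)%N &
        same_chord N x y (i%:Z - 1 - (ep i)%:Z) (i%:Z + (ep i)%:Z) |
      exists2 j : nat, (1 <= j <= de)%N &
        same_chord N x y (m%:Z - j%:Z - (xi j)%:Z) (m%:Z - j%:Z + 1 + (xi j)%:Z)].

Definition classA_params (m al de : nat) (ep xi : nat -> nat) : Prop :=
  [/\ (al + de <= m - 2)%N,
      forall i, (1 <= i < al)%N -> (ep i.+1 < ep i)%N,
      forall j, (1 <= j < de)%N -> (xi j.+1 < xi j)%N,
      forall i, (1 <= i <= al)%N ->
        al%:Z - i%:Z + 1 <= (ep i)%:Z <= m%:Z - de%:Z - i%:Z - 1 &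
      forall j, (1 <= j <= de)%N ->
        de%:Z + 1 - j%:Z <= (xi j)%:Z <= m%:Z - j%:Z - al%:Z - 1]
  /\ ((0 < al)%N -> (0 < de)%N -> (ep 1 + xi 1 <= m - 2)%N).

Lemma classA_params_mirror m al de ep xi :
  classA_params m al de ep xi -> classA_params m de al xi ep.
Proof.
move=> [[sum_le ep_dec xi_dec ep_bd xi_bd] ep_xi]; split; first split => //.
- by rewrite addnC.
- by move=> j /xi_bd; lia.
- by move=> i /ep_bd; lia.
- by move=> de_gt0 al_gt0; rewrite addnC; apply: ep_xi.
Qed.

Section ClassAChords.
Context {m al de : nat} {ep xi : nat -> nat}.
Local Notation N := (2 * m - 1)%N%:Z.
Local Notation chordA := (classA_chord m al de ep xi).

Lemma classA_chord_same x y x' y' :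
  (forall a b, same_chord N x y a b -> same_chord N x' y' a b) -> chordA x y -> chordA x' y'.
Proof.
by move=> f [[j ? /f ch]|[i ? /f ch]|[j ? /f ch]];
  [apply: Or31; exists j | apply: Or32; exists i | apply: Or33; exists j].
Qed.

Lemma classA_chord_sym x y : chordA x y -> chordA y x.
Proof. by apply: classA_chord_same => a b; rewrite /same_chord; tauto. Qed.

Lemma boundary_chord j x y : al%:Z <= j < m%:Z - de%:Z ->
  congz N x j -> congz N y (j + 1) -> chordA x y.
Proof. by move=> j_bd cx cy; apply: Or31; exists j => //; left. Qed.

Lemma left_chord i : (1 <= i <= al)%N ->
  chordA (i%:Z + (ep i)%:Z) (i%:Z - 1 - (ep i)%:Z).
Proof. by move=> i_bd; apply: Or32; exists i => //; right; split; apply: congz_refl. Qed.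

Lemma right_chord j : (0 < m)%N -> (1 <= j <= de)%N ->
  chordA (m%:Z - j%:Z - (xi j)%:Z) (2 - m%:Z - j%:Z + (xi j)%:Z).
Proof.
move=> m_gt0 j_bd; apply: Or33; exists j => //; left; split; first exact: congz_refl.
by exists (-1); lia.
Qed.

Lemma classA_chord_shift x y c : chordA (x + c * N) (y + c * N) -> chordA x y.
Proof.
apply: classA_chord_same => a b [] [[c1 e1] [c2 e2]]; [left | right];
  by split; [exists (c1 - c) | exists (c2 - c)]; lia.
Qed.

Lemma classA_chord_mirror x y c :
  classA_chord m de al xi ep (m%:Z + c * N - x) (m%:Z + c * N - y) -> chordA x y.
Proof.
have mirror a b a' b' : a' = m%:Z - b -> b' = m%:Z - a ->
    same_chord N (m%:Z + c * N - x) (m%:Z + c * N - y) a b -> same_chord N x y a' b'.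
  move=> -> ->; case=> -[[c1 e1] [c2 e2]]; [right | left]; split;
    [exists (c - c1) | exists (c - c2) | exists (c - c1) | exists (c - c2)]; lia.
case=> [[j j_bd ch]|[i i_bd ch]|[j j_bd ch]].
- by apply: Or31; exists (m%:Z - j - 1); [lia | apply: mirror ch; lia].
- by apply: Or33; exists i => //; apply: mirror ch; lia.
- by apply: Or32; exists j => //; apply: mirror ch; lia.
Qed.

End ClassAChords.

(** * The staircase argument *)

Section Staircase.
Variables (m al de : nat) (ep xi : nat -> nat) (P lo hi : nat -> int).
Hypothesis m_ge2 : (2 <= m)%N.
Hypothesis params : classA_params m al de ep xi.
Hypothesis walk : arc_walk (2 * m - 1) P lo hi.
Hypothesis start_le : P 0%N <= al%:Z.
Hypothesis path_in_arc : m%:Z - de%:Z - 1 <= hi (2 * m - 2)%N.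
Hypothesis avoid : forall t, (t.+1 < 2 * m - 1)%N ->
  ~ classA_chord m al de ep xi (P t) (P t.+1).

Local Notation chordA := (classA_chord m al de ep xi).
Local Notation R := (hi (2 * m - 2)%N).

(* At time t the walk jumps from the left end x of its interval to a new right end r. *)
Definition jump_at (t : nat) (r x : int) : Prop :=
  [/\ (0 < t < 2 * m - 1)%N, P t = r, P t.-1 = x, hi t.-1 = r - 1 &
      [/\ lo t.-1 = x, hi t = r, lo t = x & x < P 0%N]].

Definition jump (r x : int) : Prop := exists t, jump_at t r x.

Let last_lt : (2 * m - 2 < 2 * m - 1)%N.
Proof. by lia. Qed.

Let avoid_pred t : (0 < t < 2 * m - 1)%N -> ~ chordA (P t.-1) (P t).
Proof. by move=> /andP[t_gt0 t_lt]; have := avoid (t := t.-1); rewrite prednK //; apply. Qed.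

Lemma jump_exists r : al%:Z + 1 <= r <= m%:Z - de%:Z -> r <= R -> exists x, jump r x.
Proof.
move=> r_bd r_le; have [lo0 hi0 _] := walk.
have [t t_bd [Pt hi_pred hit lot]] := arc_reach walk (y := r) last_lt ltac:(lia).
have t_lt : (0 < t < 2 * m - 1)%N by lia.
have len := arc_len walk (t := t.-1) ltac:(lia).
have [P_hi | [P_lo P_ne]] : P t.-1 = r - 1 \/ (P t.-1 = lo t.-1 /\ P t.-1 <> r - 1).
- by have := arc_end walk (t := t.-1) ltac:(lia); lia.
- case: (avoid_pred t_lt); rewrite P_hi Pt.
  by apply: (boundary_chord (j := r - 1)); [lia | exact: congz_refl | exists 0; lia].
have pred_gt0 : (0 < t.-1)%N.
  by case: (posnP t.-1) => // t1_eq; move: len P_lo P_ne hi_pred; rewrite t1_eq; lia.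
have := arc_inj walk pred_gt0 (t := t.-1) ltac:(lia).
have := arc_in walk (i := 0%N) (t := t.-1) ltac:(lia) ltac:(lia).
by move=> P0_in P0_ne; exists (P t.-1), t; split => //; split; lia.
Qed.

Lemma jump_lt_start r x : jump r x -> x < P 0%N.
Proof. by case=> t [_ _ _ _ []]. Qed.

Lemma jump_at_le_last t r x : jump_at t r x -> r <= R.
Proof.
by case=> t_bd Pt _ _ [_ <- _ _]; have := arc_mono walk (i := t) (t := (2 * m - 2)%N); lia.
Qed.

Lemma jump_at_inj t t' r x x' : jump_at t r x -> jump_at t' r x' -> x = x'.
Proof.
move=> [t_bd Pt <- _ _] [t'_bd Pt' <- _ _].
by case: (ltngtP t t') => [lt|lt|-> //]; [have := arc_inj walk lt | have := arc_inj walk lt];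
  lia.
Qed.

Lemma jump_at_next t r x : al%:Z + 1 <= r <= m%:Z - de%:Z - 1 -> jump_at t r x ->
  [/\ (t.+1 < 2 * m - 1)%N, P t.+1 = x - 1 & lo t.+1 = x - 1].
Proof.
move=> r_bd [t_bd Pt Ppred hi_pred [lo_pred hit lot x_lt]]; have [_ _ step] := walk.
have t_lt : (t.+1 < 2 * m - 1)%N.
  case: (ltnP t.+1 (2 * m - 1)) => // t_ge; exfalso.
  have := arc_len walk (t := t.-1) ltac:(lia); rewrite hi_pred lo_pred.
  have -> : t.-1 = (2 * m - 3)%N by lia.
  move=> len; apply: (avoid_pred t_bd); rewrite Ppred Pt; apply: classA_chord_sym.
  by apply: (boundary_chord (j := r)); [lia | exact: congz_refl | exists (-1); lia].
case: (step t t_lt) => [[Pt1 _]|[Pt1 [lot1 _]]]; last by split; lia.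
by case: (avoid t_lt); rewrite Pt Pt1 hit; apply: (boundary_chord (j := r));
  [lia | exact: congz_refl | exact: congz_refl].
Qed.

Lemma jump_at_succ t t' r x x' : al%:Z + 1 <= r <= m%:Z - de%:Z - 1 ->
  jump_at t r x -> jump_at t' (r + 1) x' -> x' <= x - 1.
Proof.
move=> r_bd jt jt'; have [t_lt Pt1 lot1] := jump_at_next r_bd jt.
move: jt jt' => [t_bd Pt _ _ [_ hit _ x_lt]] [t'_bd Pt' _ _ [lo_pred' _ _ _]].
have t1_le : (t.+1 < t')%N.
  case: (ltngtP t.+1 t') => // [t'_le|t'_eq]; last by move: Pt'; rewrite -t'_eq; lia.
  by have := arc_in walk (i := t') (t := t) ltac:(lia) ltac:(lia); lia.
by have := arc_mono walk (i := t.+1) (t := t'.-1) ltac:(lia) ltac:(lia); lia.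
Qed.

Lemma jump_antitone r r' x x' : al%:Z + 1 <= r <= r' -> r' <= m%:Z - de%:Z ->
  jump r x -> jump r' x' -> r' + x' <= r + x.
Proof.
move=> /andP[r_gt r_le]; have [k ->] : exists k : nat, r' = r + k%:Z.
  by exists (absz (r' - r)); lia.
clear r_le => + [t jt].
elim: k x' => [|k IH] y k_le [t' jt'].
  by rewrite addr0 in jt'; rewrite (jump_at_inj jt' jt); lia.
have r1_le : r + k%:Z + 1 <= R by have := jump_at_le_last jt'; lia.
have [y1 [t1 jt1]] := jump_exists (r := r + k%:Z) ltac:(lia) ltac:(lia).
have := IH y1 ltac:(lia) (ex_intro _ t1 jt1).
rewrite (_ : r + k.+1%:Z = r + k%:Z + 1) in jt' *; last by lia.
by have := jump_at_succ (r := r + k%:Z) ltac:(lia) jt1 jt'; lia.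
Qed.

Lemma jump_last x : jump (m%:Z - de%:Z - 1) x -> 2 - 2 * de%:Z <= m%:Z - de%:Z - 1 + x.
Proof.
have [[sum_le _ _ _ _] _] := params; move=> [t jt].
have [t_lt Pt1 lot1] := jump_at_next (r := m%:Z - de%:Z - 1) ltac:(lia) jt.
have lo_last := arc_mono walk (i := t.+1) (t := (2 * m - 2)%N) ltac:(lia) last_lt.
have len := arc_len walk last_lt; have R_ge := jump_at_le_last jt.
have [R_eq | R_gt] : R = m%:Z - de%:Z - 1 \/ m%:Z - de%:Z <= R by lia.
- have [x_eq | x_gt] : x - 1 = lo (2 * m - 2)%N \/ lo (2 * m - 2)%N < x - 1 by lia.
    case: (avoid t_lt); case: jt => _ -> _ _ _; rewrite Pt1.
    by apply: (boundary_chord (j := m%:Z - de%:Z - 1));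
      [lia | exact: congz_refl | exists (-1); lia].
  by lia.
- have [x' [t' jt']] := jump_exists (r := m%:Z - de%:Z) ltac:(lia) R_gt.
  have := jump_at_succ (r := m%:Z - de%:Z - 1) ltac:(lia) jt.
  rewrite (_ : m%:Z - de%:Z - 1 + 1 = m%:Z - de%:Z); last by lia.
  move=> /(_ _ _ jt'); case: jt' => t'_bd _ _ _ [_ _ <- _].
  by have := arc_mono walk (i := t') (t := (2 * m - 2)%N) ltac:(lia) last_lt; lia.
Qed.

Lemma jump_avoids t r x : al%:Z + 1 <= r <= m%:Z - de%:Z - 1 -> jump_at t r x ->
  ~ chordA r x /\ ~ chordA r (x - 1).
Proof.
move=> r_bd jt; have [t_lt Pt1 _] := jump_at_next r_bd jt.
case: jt => t_bd Pt Ppred _ _; split.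
- by move/classA_chord_sym; rewrite -Pt -Ppred; apply: avoid_pred.
- by rewrite -Pt -Pt1; apply: avoid.
Qed.

Lemma left_squeeze i r0 x0 x : (1 <= i <= al)%N ->
  al%:Z + 1 <= r0 <= i%:Z + (ep i)%:Z -> jump r0 x0 -> r0 + x0 <= 2 * i%:Z ->
  jump (i%:Z + (ep i)%:Z) x -> i%:Z + (ep i)%:Z + x <= 2 * i%:Z - 2.
Proof.
have [[_ _ _ ep_bd _] _] := params; move=> i_bd r0_bd j0 s0 [t jt].
have W_bd := ep_bd i i_bd.
have [not_x not_x1] := jump_avoids (r := i%:Z + (ep i)%:Z) ltac:(lia) jt.
have anti := jump_antitone (r := r0) (r' := i%:Z + (ep i)%:Z) ltac:(lia) ltac:(lia) j0
  (ex_intro _ t jt).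
have [//|[x_eq|x_eq]] : i%:Z + (ep i)%:Z + x <= 2 * i%:Z - 2 \/
  x = i%:Z - 1 - (ep i)%:Z \/ x - 1 = i%:Z - 1 - (ep i)%:Z by lia.
- by case: not_x; rewrite x_eq; apply: left_chord.
- by case: not_x1; rewrite x_eq; apply: left_chord.
Qed.

Lemma left_bound i x : (1 <= i <= al)%N ->
  jump (i%:Z + (ep i)%:Z) x -> i%:Z + (ep i)%:Z + x <= 2 * i%:Z - 2.
Proof.
have [[sum_le ep_dec _ ep_bd _] _] := params.
have [k k_eq] : exists k, (al - i)%N = k by eexists.
elim: k i x k_eq => [|k IH] i x k_eq i_bd; have := ep_bd i i_bd => ep_i.
- have [x0 j0] := jump_exists (r := al%:Z + 1) ltac:(lia) ltac:(lia).
  apply: (left_squeeze i_bd (r0 := al%:Z + 1) _ j0); first by lia.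
  by have := jump_lt_start j0; lia.
- have i1_bd : (1 <= i.+1 <= al)%N by lia.
  have := ep_bd i.+1 i1_bd; have := ep_dec i ltac:(lia) => ep_lt ep_i1.
  have [x0 j0] := jump_exists (r := i.+1%:Z + (ep i.+1)%:Z) ltac:(lia) ltac:(lia).
  apply: (left_squeeze i_bd (r0 := i.+1%:Z + (ep i.+1)%:Z) _ j0); first by lia.
  by have := IH i.+1 x0 ltac:(lia) i1_bd j0; lia.
Qed.

Lemma right_squeeze j r0 x0 x : (1 <= j <= de)%N ->
  m%:Z - j%:Z - (xi j)%:Z <= r0 <= m%:Z - de%:Z - 1 -> jump r0 x0 ->
  2 - 2 * j%:Z <= r0 + x0 ->
  jump (m%:Z - j%:Z - (xi j)%:Z) x -> 4 - 2 * j%:Z <= m%:Z - j%:Z - (xi j)%:Z + x.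
Proof.
have [[_ _ _ _ xi_bd] _] := params; move=> j_bd r0_bd j0 s0 [t jt].
have L_bd := xi_bd j j_bd.
have [not_x not_x1] := jump_avoids (r := m%:Z - j%:Z - (xi j)%:Z) ltac:(lia) jt.
have anti := jump_antitone (r := m%:Z - j%:Z - (xi j)%:Z) (r' := r0) ltac:(lia) ltac:(lia)
  (ex_intro _ t jt) j0.
have [//|[x_eq|x_eq]] : 4 - 2 * j%:Z <= m%:Z - j%:Z - (xi j)%:Z + x \/
  x = 2 - m%:Z - j%:Z + (xi j)%:Z \/ x - 1 = 2 - m%:Z - j%:Z + (xi j)%:Z by lia.
- by case: not_x; rewrite x_eq; apply: right_chord; lia.
- by case: not_x1; rewrite x_eq; apply: right_chord; lia.
Qed.

Lemma right_bound j x : (1 <= j <= de)%N ->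
  jump (m%:Z - j%:Z - (xi j)%:Z) x -> 4 - 2 * j%:Z <= m%:Z - j%:Z - (xi j)%:Z + x.
Proof.
have [[sum_le _ xi_dec _ xi_bd] _] := params.
have [k k_eq] : exists k, (de - j)%N = k by eexists.
elim: k j x k_eq => [|k IH] j x k_eq j_bd; have := xi_bd j j_bd => xi_j.
- have [x0 j0] := jump_exists (r := m%:Z - de%:Z - 1) ltac:(lia) ltac:(lia).
  apply: (right_squeeze j_bd (r0 := m%:Z - de%:Z - 1) _ j0); first by lia.
  by have := jump_last j0; lia.
- have j1_bd : (1 <= j.+1 <= de)%N by lia.
  have := xi_bd j.+1 j1_bd; have := xi_dec j ltac:(lia) => xi_lt xi_j1.
  have [x0 j0] := jump_exists (r := m%:Z - j.+1%:Z - (xi j.+1)%:Z) ltac:(lia) ltac:(lia).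
  apply: (right_squeeze j_bd (r0 := m%:Z - j.+1%:Z - (xi j.+1)%:Z) _ j0); first by lia.
  by have := IH j.+1 x0 ltac:(lia) j1_bd j0; lia.
Qed.

Lemma jump_sum_nonpos r x : al%:Z + 1 <= r <= m%:Z - de%:Z ->
  ((0 < al)%N -> 1 + (ep 1%N)%:Z <= r) -> jump r x -> r + x <= 0.
Proof.
have [[sum_le _ _ ep_bd _] _] := params; move=> r_bd r_ge jx.
case: (posnP al) => [al0|al_gt0].
- have [x0 j0] := jump_exists (r := 1) ltac:(lia) ltac:(lia).
  have := jump_antitone (r := 1) (r' := r) ltac:(lia) ltac:(lia) j0 jx.
  by have := jump_lt_start j0; lia.
- have := ep_bd 1%N ltac:(lia) => ep1.
  have [x0 j0] := jump_exists (r := 1 + (ep 1%N)%:Z) ltac:(lia) ltac:(lia).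
  have := left_bound (i := 1%N) ltac:(lia) j0.
  have := jump_antitone (r := 1 + (ep 1%N)%:Z) (r' := r) ltac:(lia) ltac:(lia) j0 jx.
  by lia.
Qed.

Lemma staircase : False.
Proof.
have [[sum_le _ _ ep_bd xi_bd] ep_xi] := params.
case: (posnP de) => [de0|de_gt0].
- have [x jx] := jump_exists (r := m%:Z - de%:Z - 1) ltac:(lia) ltac:(lia).
  have := jump_last jx; have := jump_sum_nonpos (r := m%:Z - de%:Z - 1) ltac:(lia) _ jx.
  by have := ep_bd 1%N; lia.
- have := xi_bd 1%N ltac:(lia) => xi1.
  have [x jx] := jump_exists (r := m%:Z - 1 - (xi 1%N)%:Z) ltac:(lia) ltac:(lia).
  have := right_bound (j := 1%N) ltac:(lia) jx.
  by have := jump_sum_nonpos (r := m%:Z - 1 - (xi 1%N)%:Z) ltac:(lia) _ jx; lia.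
Qed.

End Staircase.

Section ArcWalkMeetsClassA.
Variables (m al de : nat) (ep xi : nat -> nat) (P lo hi : nat -> int).
Hypothesis m_ge2 : (2 <= m)%N.
Hypothesis params : classA_params m al de ep xi.
Hypothesis walk : arc_walk (2 * m - 1) P lo hi.
Hypothesis avoid : forall t, (t.+1 < 2 * m - 1)%N ->
  ~ classA_chord m al de ep xi (P t) (P t.+1).

Local Notation N := (2 * m - 1)%N%:Z.
Local Notation L := (lo (2 * m - 2)%N).
Local Notation R := (hi (2 * m - 2)%N).

Let last_lt : (2 * m - 2 < 2 * m - 1)%N.
Proof. by lia. Qed.

Lemma start_outside_path j : congz N j (P 0%N) -> al%:Z < j < m%:Z - de%:Z -> False.
Proof.
move=> [c j_eq] j_bd; have [lo0 hi0 step] := walk.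
have first_lt : (1 < 2 * m - 1)%N by lia.
apply: (avoid first_lt); case: (step 0%N first_lt) => [[-> _]|[-> _]]; rewrite ?lo0 ?hi0.
- by apply: (boundary_chord (j := j)); [lia | exists (- c) | exists (- c)]; lia.
- apply: classA_chord_sym.
  by apply: (boundary_chord (j := j - 1)); [lia | exists (- c) | exists (- c)]; lia.
Qed.

Lemma end_outside_path : al%:Z < R < m%:Z - de%:Z - 1 -> False.
Proof.
move=> R_bd; have [_ _ step] := walk.
have t_lt : ((2 * m - 3).+1 < 2 * m - 1)%N by lia.
have len := arc_len walk (t := (2 * m - 3)%N) ltac:(lia).
have len' := arc_len walk last_lt.
have prev := arc_end walk (t := (2 * m - 3)%N) ltac:(lia).
have := step _ t_lt; have := avoid t_lt.
rewrite (_ : (2 * m - 3).+1 = (2 * m - 2)%N); last by lia.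
move=> avoid_last [[P_last [hi_last lo_last]]|[P_last [lo_last hi_last]]];
  apply: avoid_last; rewrite P_last; case: prev => ->.
- apply: classA_chord_sym.
  by apply: (boundary_chord (j := R)); [lia | exists 0 | exists (-1)]; lia.
- by apply: (boundary_chord (j := R - 1)); [lia | exists 0 | exists 0]; lia.
- apply: classA_chord_sym.
  by apply: (boundary_chord (j := R + 1)); [lia | exists (-1) | exists (-1)]; lia.
- by apply: (boundary_chord (j := R)); [lia | exists 0 | exists (-1)]; lia.
Qed.

(* Unless its first or last step runs along the boundary path, the walk satisfies the
   hypotheses of the staircase argument, possibly after mirroring. *)
Lemma arc_meets_classA_normalized : L <= al%:Z < L + N -> False.
Proof.
have [[sum_le _ _ _ _] _] := params; move=> al_in.
have len := arc_len walk last_lt.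
have s_in := arc_in walk (i := 0%N) (t := (2 * m - 2)%N) ltac:(lia) last_lt.
have direct : P 0%N <= al%:Z -> m%:Z - de%:Z - 1 <= R -> False.
  by move=> s_le path_le; apply: (staircase m_ge2 params walk s_le path_le avoid).
have mirrored (k : int) : m%:Z + k * N - P 0%N <= de%:Z ->
    m%:Z - al%:Z - 1 <= m%:Z + k * N - L -> False.
  move=> s_ge path_le.
  apply: (staircase m_ge2 (classA_params_mirror params) (arc_walk_mirror _ walk) s_ge path_le).
  by move=> t t_lt /classA_chord_mirror; apply: avoid.
have [R_ge | R_lt] := lerP (m%:Z - de%:Z) R.
- have [s_le | s_gt] := lerP (P 0%N) al%:Z; first by apply: direct; lia.
  have [s_lt | s_ge] := ltrP (P 0%N) (m%:Z - de%:Z).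
    by apply: (start_outside_path (j := P 0%N)); [exact: congz_refl | lia].
  by apply: (mirrored 0); lia.
- have [s_le | s_gt] := lerP (P 0%N) al%:Z; last first.
    by apply: (start_outside_path (j := P 0%N)); [exact: congz_refl | lia].
  have [s_lt | s_ge] := ltrP (P 0%N) (m%:Z - de%:Z - N).
    by apply: (start_outside_path (j := P 0%N + N)); [exists 1 | ]; lia.
  have [R_ge1 | R_lt1] := lerP (m%:Z - de%:Z - 1) R; first exact: direct.
  have [R_le | R_gt] := lerP R al%:Z; first by apply: (mirrored (-1)); lia.
  by apply: end_outside_path; lia.
Qed.

End ArcWalkMeetsClassA.

Lemma arc_walk_meets_classA m al de ep xi P lo hi :
  (2 <= m)%N -> classA_params m al de ep xi -> arc_walk (2 * m - 1) P lo hi ->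
  (forall t, (t.+1 < 2 * m - 1)%N -> ~ classA_chord m al de ep xi (P t) (P t.+1)) -> False.
Proof.
move=> m_ge2 params walk avoid; set N := (2 * m - 1)%N%:Z.
have N_gt0 : 0 < N by rewrite /N; lia.
pose c := ((al%:Z - lo (2 * m - 2)%N) %/ N)%Z.
have al_in : lo (2 * m - 2)%N + c * N <= al%:Z < lo (2 * m - 2)%N + c * N + N.
  have := divz_eq (al%:Z - lo (2 * m - 2)%N) N.
  have := modz_ge0 (al%:Z - lo (2 * m - 2)%N) (lt0r_neq0 N_gt0).
  by have := ltz_pmod (al%:Z - lo (2 * m - 2)%N) N_gt0; rewrite /c; lia.
apply: (arc_meets_classA_normalized m_ge2 params (arc_walk_shift (c * N) walk)) => //=.
by move=> t t_lt /classA_chord_shift; apply: avoid.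
Qed.

(** * Lifting simple Hamiltonian paths *)

Definition strictly_between (a b x : nat) : bool := (minn a b < x < maxn a b)%N.

Lemma crossE n (a b c d : 'I_n.+1) :
  cross a b c d = uniq [:: a; b; c; d] && (strictly_between a b c != strictly_between a b d).
Proof. by []. Qed.

Lemma chord_separates (N a b c d : int) : 0 < N -> a < c < b -> b < d < a + N ->
  strictly_between (zres N a) (zres N b) (zres N c)
    != strictly_between (zres N a) (zres N b) (zres N d).
Proof.
move=> N_gt0 acb bda; rewrite /strictly_between.
have [Q a_eq] := zres_congz a N_gt0; have a_lt := zres_lt a N_gt0.
have win z : a <= z < a + N -> 0 <= z - Q * N < 2 * N by lia.
have := zres_two_windows (Q := Q) N_gt0 (win b ltac:(lia)).
have := zres_two_windows (Q := Q) N_gt0 (win c ltac:(lia)).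
have := zres_two_windows (Q := Q) N_gt0 (win d ltac:(lia)).
have := zres_lt b N_gt0; have := zres_lt c N_gt0; have := zres_lt d N_gt0.
by set QN := Q * N in a_eq *; lia.
Qed.

Lemma exists_switch (f : nat -> bool) i j : (i <= j)%N -> f i != f j ->
  exists k, (i <= k < j)%N /\ f k != f k.+1.
Proof.
elim: j => [|j IH] i_le fij; first by move: i_le fij; rewrite leqn0 => /eqP ->; rewrite eqxx.
case: (ltngtP i j.+1) i_le => // [i_lt|i_eq] _; last by rewrite i_eq eqxx in fij.
have [e|ne] := eqVneq (f i) (f j); first by exists j; rewrite -e fij; lia.
by have [k [k_bd fk]] := IH i_lt ne; exists k; split => //; lia.
Qed.

Lemma mem_zip_behead (T : eqType) (x0 : T) (p : seq T) k : (k.+1 < size p)%N ->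
  (nth x0 p k, nth x0 p k.+1) \in zip p (behead p).
Proof.
elim: p k => [|x [|y p] IH] [|k] //= k_lt; first by rewrite inE eqxx.
by rewrite inE (IH k) ?orbT.
Qed.

Lemma zip_beheadP (T : eqType) (x0 : T) (p : seq T) e : e \in zip p (behead p) ->
  exists k, (k.+1 < size p)%N /\ e = (nth x0 p k, nth x0 p k.+1).
Proof.
elim: p e => [|x [|y p] IH] e //=; rewrite inE => /orP[/eqP ->|/IH[k [k_lt ->]]].
- by exists 0%N.
- by exists k.+1.
Qed.

Lemma mem_full_uniq n (p : seq 'I_n.+1) x : uniq p -> size p = n.+1 -> x \in p.
Proof.
move=> p_uniq p_size; apply: contraT => x_notin.
have := uniq_leq_size (s1 := x :: p) (s2 := enum 'I_n.+1).
by rewrite /= x_notin p_uniq size_enum_ord p_size ltnn; apply=> // y; rewrite mem_enum.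
Qed.

Fixpoint arc_lift (N : int) (v : nat -> nat) (t : nat) : int * int * int :=
  if t is t'.+1 then
    let: (_, lo, hi) := arc_lift N v t' in
    if zres N (hi + 1) == v t then (hi + 1, lo, hi + 1) else (lo - 1, lo - 1, hi)
  else ((v 0%N)%:Z, (v 0%N)%:Z, (v 0%N)%:Z).

Definition lift_pos N v t := (arc_lift N v t).1.1.
Definition lift_lo N v t := (arc_lift N v t).1.2.
Definition lift_hi N v t := (arc_lift N v t).2.

Lemma arc_walk_lift N v n : arc_walk n (lift_pos N v) (lift_lo N v) (lift_hi N v).
Proof.
split => // t _; rewrite /lift_pos /lift_lo /lift_hi /=.
by case: (arc_lift N v t) => [[x lo] hi] /=; case: ifP => _ /=; [left | right]; lia.
Qed.

Lemma lift_pos_right N v t : zres N (lift_hi N v t + 1) = v t.+1 ->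
  lift_pos N v t.+1 = lift_hi N v t + 1.
Proof.
by rewrite /lift_pos /lift_hi /=; case: (arc_lift N v t) => [[x lo] hi] /= ->; rewrite eqxx.
Qed.

Lemma lift_pos_left N v t : zres N (lift_hi N v t + 1) != v t.+1 ->
  lift_pos N v t.+1 = lift_lo N v t - 1.
Proof.
by rewrite /lift_pos /lift_hi /lift_lo /=; case: (arc_lift N v t) => [[x lo] hi] /= /negPf ->.
Qed.

Section SHPLift.
Variables (n : nat) (p : seq 'I_n.+1).
Hypothesis shp : SHP p.

Local Notation N := n.+1%:Z.
Local Notation v t := (nat_of_ord (nth ord0 p t)).
Local Notation Pl := (lift_pos N (fun t => v t)).
Local Notation Ll := (lift_lo N (fun t => v t)).
Local Notation Hl := (lift_hi N (fun t => v t)).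

Let N_gt0 : 0 < N.
Proof. by []. Qed.

Lemma vertex_inj i j : (i < n.+1)%N -> (j < n.+1)%N -> v i = v j -> i = j.
Proof.
have /and3P[p_uniq /eqP p_size _] := shp; move=> i_lt j_lt /val_inj eq_ij.
by apply/eqP; rewrite -(nth_uniq ord0 (s := p)) ?p_size // eq_ij.
Qed.

Lemma vertex_index (x : nat) : (x < n.+1)%N -> exists2 j, (j < n.+1)%N & v j = x.
Proof.
have /and3P[p_uniq /eqP p_size _] := shp; move=> x_lt.
have x_in := mem_full_uniq (Ordinal x_lt) p_uniq p_size.
exists (index (Ordinal x_lt) p); last by rewrite nth_index.
by rewrite -[X in (_ < X)%N]p_size index_mem.
Qed.

Lemma SHP_later_not_separated t j1 j2 : (t.+1 < j1 < n.+1)%N -> (t.+1 < j2 < n.+1)%N ->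
  strictly_between (v t) (v t.+1) (v j1) != strictly_between (v t) (v t.+1) (v j2) ->
  False.
Proof.
wlog le12 : j1 j2 / (j1 <= j2)%N.
  move=> wlog b1 b2 sep; case: (leqP j1 j2) => [|/ltnW] le; first exact: wlog sep.
  by apply: (wlog j2 j1) => //; rewrite eq_sym.
move=> b1 b2 sep.
have [k [k_bd sw]] := exists_switch (f := fun k => strictly_between (v t) (v t.+1) (v k)) le12 sep.
have /and3P[p_uniq /eqP p_size noncross] := shp.
have e1 : (nth ord0 p t, nth ord0 p t.+1) \in path_pairs p.
  by apply: mem_zip_behead; rewrite p_size; lia.
have e2 : (nth ord0 p k, nth ord0 p k.+1) \in path_pairs p.
  by apply: mem_zip_behead; rewrite p_size; lia.
move: (allP noncross _ e1) => /allP /(_ _ e2) /negP; apply.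
rewrite crossE; apply/andP; split; last exact: sw.
by clear sep sw; rewrite /= !inE !negb_or !(nth_uniq ord0) ?p_size //; lia.
Qed.

Lemma unvisited_index t y z j : (t.+1 < n.+1)%N ->
  (forall i, (i <= t)%N -> zres N (Pl i) = v i) -> zres N y = v t.+1 ->
  Hl t < y < Ll t + N -> Hl t < z < Ll t + N -> z != y ->
  (j < n.+1)%N -> v j = zres N z -> (t.+1 < j)%N.
Proof.
move=> t_lt res_le y_res y_bd z_bd z_ne j_lt vj; have walk := arc_walk_lift N (fun t => v t) n.+1.
have len := arc_len walk (t := t) ltac:(lia).
rewrite ltnNge; apply/negP => j_le; case: (ltngtP j t.+1) j_le => // [j_lt'|j_eq] _.
- have Pj_in := arc_in walk (i := j) (t := t) ltac:(lia) ltac:(lia).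
  by have := zres_inj_window N_gt0 (etrans (res_le j ltac:(lia)) vj) ltac:(lia); lia.
- move: vj; rewrite j_eq -y_res => /esym /(zres_inj_window N_gt0) eq_zy.
  by have := eq_zy ltac:(lia); move/eqP: z_ne.
Qed.

Lemma lift_residue_step t : (t.+1 < n.+1)%N ->
  (forall i, (i <= t)%N -> zres N (Pl i) = v i) -> zres N (Pl t.+1) = v t.+1.
Proof.
move=> t_lt res_le; have walk := arc_walk_lift N (fun t => v t) n.+1.
have [right_eq|right_ne] := eqVneq (zres N (Hl t + 1)) (v t.+1).
  by rewrite (lift_pos_right right_eq).
rewrite (lift_pos_left right_ne).
have len := arc_len walk (t := t) ltac:(lia).
have [y y_bd y_res] : exists2 y, Ll t <= y < Ll t + N & zres N y = v t.+1.
  by apply: zres_lift => //; have := ltn_ord (nth ord0 p t.+1); lia.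
have y_gt : Hl t < y.
  have [y_le|//] := lerP y (Hl t); exfalso.
  have [i i_le Pi] := arc_cover walk (t := t) (y := y) ltac:(lia) ltac:(lia).
  have := vertex_inj (i := i) (j := t.+1) ltac:(lia) t_lt.
  by rewrite -(res_le i i_le) Pi y_res => /(_ erefl); lia.
have y_ne : y <> Hl t + 1 by move=> y_eq; move: right_ne; rewrite -y_eq y_res eqxx.
have [y_last|y_mid] : y = Ll t + N - 1 \/ Hl t + 1 < y < Ll t + N - 1 by lia.
  by rewrite -y_res; apply: congz_zres; exists (-1); lia.
(* Otherwise the unvisited vertices hi + 1 and lo - 1 lie on opposite sides of the chord
   from P t to y, so the rest of the path would have to cross it. *)
have [jc jc_lt vjc] : exists2 j, (j < n.+1)%N & v j = zres N (Hl t + 1).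
  by apply: vertex_index; have := zres_lt (Hl t + 1) N_gt0; lia.
have [jd jd_lt vjd] : exists2 j, (j < n.+1)%N & v j = zres N (Ll t + N - 1).
  by apply: vertex_index; have := zres_lt (Ll t + N - 1) N_gt0; lia.
have Pt_in := arc_in walk (i := t) (t := t) (leqnn t) ltac:(lia).
have := chord_separates N_gt0 (a := Pl t) (b := y) (c := Hl t + 1) (d := Ll t + N - 1)
  ltac:(lia) ltac:(lia).
rewrite res_le // y_res -vjc -vjd => sep; exfalso; apply: (SHP_later_not_separated _ _ sep).
- rewrite jc_lt andbT; apply: (unvisited_index t_lt res_le y_res _ _ _ jc_lt vjc);
    [lia | lia | apply/eqP; lia].
- rewrite jd_lt andbT; apply: (unvisited_index t_lt res_le y_res _ _ _ jd_lt vjd);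
    [lia | lia | apply/eqP; lia].
Qed.

Lemma lift_residue t : (t < n.+1)%N -> zres N (Pl t) = v t.
Proof.
move=> t_lt; suff : forall i, (i <= t)%N -> zres N (Pl i) = v i by apply.
elim: t t_lt => [|t IH] t_lt i.
- rewrite leqn0 => /eqP ->; apply/eqP; rewrite -eqz_nat zres_small ?eqxx // /lift_pos /=.
  by have := ltn_ord (nth ord0 p 0%N); lia.
- move=> i_le; case: (ltngtP i t.+1) i_le => // [i_lt|->] _.
    exact: IH (ltnW t_lt) i i_lt.
  exact: lift_residue_step t_lt (IH (ltnW t_lt)).
Qed.

End SHPLift.

Lemma SHP_arc_walk n (p : seq 'I_n.+1) : SHP p ->
  exists P lo hi, arc_walk n.+1 P lo hi /\
    forall t, (t < n.+1)%N -> zres n.+1%:Z (P t) = nth ord0 p t.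
Proof.
move=> shp; set v := fun t => nat_of_ord (nth ord0 p t).
exists (lift_pos n.+1%:Z v), (lift_lo n.+1%:Z v), (lift_hi n.+1%:Z v).
split; first exact: arc_walk_lift.
exact: lift_residue.
Qed.

(** * Zigzag paths and the lower bound *)

Lemma vmod_val n z : nat_of_ord (vmod n z) = zres n.+1%:Z z.
Proof. by rewrite /vmod inordK //; have := @zres_lt n.+1%:Z z ltac:(lia); lia. Qed.

Lemma vmodDmul n z c : vmod n (z + c * n.+1%:Z) = vmod n z.
Proof. by apply: val_inj; rewrite /= !vmod_val zresDmul. Qed.

Lemma parallel_no_cross (N : int) (a b c d : nat) (j : int) :
  a%:Z < N -> b%:Z < N -> c%:Z < N -> d%:Z < N -> uniq [:: a; b; c; d] ->
  -1 <= j <= 1 -> congz N (a%:Z + b%:Z) (c%:Z + d%:Z + j) ->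
  strictly_between a b c = strictly_between a b d.
Proof.
move=> a_lt b_lt c_lt d_lt /= abcd j_bd [E sum_eq]; rewrite /strictly_between.
move: abcd; rewrite !inE !negb_or => /and4P[/and3P[ab ac ad] /andP[bc bd] cd _].
by case: (mulz_cases E (N := N) ltac:(lia)); lia.
Qed.

Lemma double_congz_eq (m : nat) (x y : int) : 0 <= x < (2 * m - 1)%N%:Z ->
  0 <= y < (2 * m - 1)%N%:Z -> congz (2 * m - 1)%N%:Z (2 * x) (2 * y) -> x = y.
Proof.
by move=> x_bd y_bd [E eq2]; case: (mulz_cases E (N := (2 * m - 1)%N%:Z) ltac:(lia)); lia.
Qed.

Definition zigzag (t : nat) : int := if odd t then (t.+1./2)%:Z else - (t./2)%:Z.

Lemma zigzag_sum t : zigzag t + zigzag t.+1 = (~~ odd t)%:Z.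
Proof. by rewrite /zigzag /=; have := odd_double_half t; case: (odd t) => /= t_eq; lia. Qed.

Lemma zigzag_bound k t : (t <= 2 * k)%N -> - k%:Z <= zigzag t <= k%:Z.
Proof. by rewrite /zigzag; have := odd_double_half t; case: (odd t) => /= t_eq; lia. Qed.

Lemma zigzag_inj : injective zigzag.
Proof.
move=> t t'; rewrite /zigzag; have := odd_double_half t; have := odd_double_half t'.
by case: (odd t); case: (odd t') => /= t_eq t'_eq; lia.
Qed.

Definition zigzag_path n (c : 'I_n.+1) : seq 'I_n.+1 :=
  mkseq (fun t => vmod n (c%:Z + zigzag t)) n.+1.

Lemma zigzag_path_nth n (c : 'I_n.+1) t : (t < n.+1)%N ->
  nth ord0 (zigzag_path c) t = vmod n (c%:Z + zigzag t).
Proof. by move=> t_lt; rewrite /zigzag_path nth_mkseq. Qed.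

Lemma set2_val_sum N (x1 y1 x2 y2 : 'I_N) : x1 != y1 -> [set x1; y1] = [set x2; y2] ->
  (x1 + y1 = x2 + y2 :> nat)%N.
Proof.
move=> ne e; have : y1 \in [set x2; y2] by rewrite -e !inE eqxx orbT.
have : x1 \in [set x2; y2] by rewrite -e !inE eqxx.
rewrite !inE => /orP[/eqP e1|/eqP e1] /orP[/eqP e2|/eqP e2].
- by rewrite e1 e2 eqxx in ne.
- by rewrite e1 e2.
- by rewrite e1 e2 addnC.
- by rewrite e1 e2 eqxx in ne.
Qed.

Section ZigzagPaths.
Variable m : nat.
Hypothesis m_gt0 : (0 < m)%N.

Local Notation n := (2 * m - 2)%N.
Local Notation N := n.+1%:Z.

Let N_gt0 : 0 < N.
Proof. by []. Qed.

Lemma zigzag_vertex_inj (c : 'I_n.+1) t t' : (t < n.+1)%N -> (t' < n.+1)%N ->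
  vmod n (c%:Z + zigzag t) = vmod n (c%:Z + zigzag t') -> t = t'.
Proof.
move=> t_lt t'_lt /(congr1 val); rewrite /= !vmod_val => eq_res.
have := zigzag_bound (k := (m - 1)%N) (t := t) ltac:(lia).
have := zigzag_bound (k := (m - 1)%N) (t := t') ltac:(lia).
by move=> bd bd'; apply: zigzag_inj; apply: (addrI c%:Z); apply: (zres_inj_window _ eq_res); lia.
Qed.

Lemma zigzag_edge_sum (c : int) k :
  congz N ((zres N (c + zigzag k))%:Z + (zres N (c + zigzag k.+1))%:Z) (2 * c + (~~ odd k)%:Z).
Proof.
have := zigzag_sum k; have [ca ea] := zres_congz (c + zigzag k) N_gt0.
by have [cb eb] := zres_congz (c + zigzag k.+1) N_gt0; exists (- ca - cb); lia.
Qed.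

Lemma zigzag_path_noncross (c : 'I_n.+1) k l : (k < n)%N -> (l < n)%N ->
  ~~ cross (nth ord0 (zigzag_path c) k) (nth ord0 (zigzag_path c) k.+1)
           (nth ord0 (zigzag_path c) l) (nth ord0 (zigzag_path c) l.+1).
Proof.
move=> k_lt l_lt; have [? ? ? ?] : [/\ k < n.+1, k.+1 < n.+1, l < n.+1 & l.+1 < n.+1]%N.
  by split; lia.
rewrite crossE !zigzag_path_nth //.
apply/negP => /andP[u]; apply/negP; rewrite negbK; apply/eqP.
apply: (parallel_no_cross (N := N) (j := (~~ odd k)%:Z - (~~ odd l)%:Z)).
- by rewrite vmod_val zres_lt.
- by rewrite vmod_val zres_lt.
- by rewrite vmod_val zres_lt.
- by rewrite vmod_val zres_lt.
- by rewrite -(map_inj_uniq val_inj) in u.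
- by case: (odd k); case: (odd l).
- have [Ek ek] := zigzag_edge_sum c k; have [El el] := zigzag_edge_sum c l.
  by rewrite !vmod_val; exists (Ek - El); lia.
Qed.

Lemma zigzag_path_SHP (c : 'I_n.+1) : SHP (zigzag_path c).
Proof.
have size_z : size (zigzag_path c) = n.+1 by rewrite size_mkseq.
apply/and3P; split; [|by rewrite size_z|].
- rewrite /zigzag_path /mkseq map_inj_in_uniq ?iota_uniq // => t t'.
  by rewrite !mem_iota => t_in t'_in; apply: zigzag_vertex_inj; lia.
- apply/allP => e1 /(zip_beheadP ord0)[k [k_lt ->]].
  apply/allP => e2 /(zip_beheadP ord0)[l [l_lt ->]].
  by apply: zigzag_path_noncross; rewrite size_z in k_lt l_lt; lia.
Qed.

Lemma zigzag_path_edge (c : 'I_n.+1) e : e \in path_edges (zigzag_path c) ->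
  exists2 k, (k < n)%N & e = [set vmod n (c%:Z + zigzag k); vmod n (c%:Z + zigzag k.+1)].
Proof.
rewrite inE => /mapP[pr /(zip_beheadP ord0)[k [k_lt ->]] ->]; rewrite size_mkseq in k_lt.
by exists k; rewrite ?zigzag_path_nth //; lia.
Qed.

Lemma zigzag_edge_parity (c1 c2 : 'I_n.+1) k1 k2 : (k1 < n)%N -> (k2 < n)%N ->
  odd k1 = odd k2 ->
  [set vmod n (c1%:Z + zigzag k1); vmod n (c1%:Z + zigzag k1.+1)] =
    [set vmod n (c2%:Z + zigzag k2); vmod n (c2%:Z + zigzag k2.+1)] -> c1 = c2.
Proof.
move=> k1_lt k2_lt odd_eq e_eq.
have ne : vmod n (c1%:Z + zigzag k1) != vmod n (c1%:Z + zigzag k1.+1).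
  by apply/eqP => /zigzag_vertex_inj; lia.
have := set2_val_sum ne e_eq; rewrite !vmod_val => sum_eq.
apply: ord_inj; apply/eqP; rewrite -eqz_nat; apply/eqP.
have := ltn_ord c1; have := ltn_ord c2 => c2_lt c1_lt.
apply: (double_congz_eq (m := m)); [lia | lia |].
have [E1 e1] := zigzag_edge_sum c1 k1; have [E2 e2] := zigzag_edge_sum c2 k2.
by rewrite odd_eq in e1; exists (E2 - E1); lia.
Qed.

Lemma zigzag_edge_count (e : {set 'I_n.+1}) :
  (#|[set c | e \in path_edges (zigzag_path c)]| <= 2)%N.
Proof.
pose par (c : 'I_n.+1) := [exists k : 'I_n,
  (e == [set vmod n (c%:Z + zigzag k); vmod n (c%:Z + zigzag k.+1)]) && odd k].
have witness c : c \in [set c | e \in path_edges (zigzag_path c)] -> exists k, [/\ (k < n)%N,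
    e = [set vmod n (c%:Z + zigzag k); vmod n (c%:Z + zigzag k.+1)] & odd k = par c].
  rewrite inE => /zigzag_path_edge[k k_lt e_eq]; case par_c: (par c); move: par_c; rewrite /par.
  - by move=> /existsP[k' /andP[/eqP e_eq' odd_k']]; exists k'.
  - move=> /negbT/existsPn/(_ (Ordinal k_lt)); rewrite /= e_eq eqxx /= => /negbTE odd_k.
    by exists k.
rewrite -[X in (_ <= X)%N]card_bool; apply: (@leq_card_in _ _ par) => c1 c2.
move=> /witness[k1 [k1_lt e1 p1]] /witness[k2 [k2_lt e2 p2]] par_eq.
by apply: (zigzag_edge_parity k1_lt k2_lt); [rewrite p1 p2 par_eq | rewrite -e1 -e2].
Qed.

Lemma SHP_hitting_set_card (B' : {set {set 'I_n.+1}}) : hits_all_SHP B' -> (m <= #|B'|)%N.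
Proof.
move=> hits.
have per_edge e : (\sum_(c < n.+1) (e \in path_edges (zigzag_path c)) <= 2)%N.
  rewrite -big_mkcond /= sum1dep_card; exact: zigzag_edge_count.
have per_path (c : 'I_n.+1) : (1 <= \sum_(e in B') (e \in path_edges (zigzag_path c)))%N.
  by have [e e_in e_B] := hits _ (zigzag_path_SHP c); rewrite (bigD1 e) //= e_in.
have cover : (\sum_(c < n.+1) 1 <=
    \sum_(c < n.+1) \sum_(e in B') (e \in path_edges (zigzag_path c)))%N.
  by apply: leq_sum => c _; apply: per_path.
rewrite exchange_big /= in cover.
have bound : (\sum_(e in B') \sum_(c < n.+1) (e \in path_edges (zigzag_path c)) <=
    \sum_(e in B') 2)%N by apply: leq_sum => e _; apply: per_edge.
by have := leq_trans cover bound; rewrite !sum_nat_const card_ord; lia.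
Qed.

End ZigzagPaths.

(** * Class A sets are blockers *)

Lemma vmod_congz n x a : congz n.+1%:Z x a -> vmod n x = vmod n a.
Proof. by move=> [c ->]; rewrite vmodDmul. Qed.

Lemma same_chord_seg n x y a b k : same_chord n.+1%:Z (x - k) (y - k) a b ->
  [set vmod n x; vmod n y] = seg n (a + k) (b + k).
Proof.
have shift z w : congz n.+1%:Z (z - k) w -> vmod n z = vmod n (w + k).
  by move=> [c zw]; apply: vmod_congz; exists c; lia.
by case=> -[/shift -> /shift ->]; rewrite /seg // setUC.
Qed.

Lemma seg_card n (a b : int) : 1 <= b - a <= n%:Z -> #|seg n a b| = 2%N.
Proof.
move=> ab; rewrite /seg cards2; case: eqP => // /(congr1 val); rewrite /= !vmod_val.
by move/(zres_inj_window (N := n.+1%:Z) ltac:(lia)); lia.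
Qed.

Section ClassASet.
Variables (m : nat) (k : int) (al de : nat) (ep xi : nat -> nat).
Hypothesis m_ge2 : (2 <= m)%N.

Lemma classA_chord_mem x y : classA_chord m al de ep xi (x - k) (y - k) ->
  [set vmod (2 * m - 2) x; vmod (2 * m - 2) y] \in classA_set m k al de ep xi.
Proof.
rewrite /classA_chord (_ : (2 * m - 1)%N = (2 * m - 2).+1); last by lia.
rewrite /classA_set inE !mem_cat.
case=> [[j j_bd /same_chord_seg ->]|[i i_bd /same_chord_seg ->]|[j j_bd /same_chord_seg ->]].
- apply/orP; left; apply/mapP; exists (absz j); first by rewrite mem_iota; lia.
  by congr seg; lia.
- by apply/orP; right; apply/orP; left; apply/mapP; exists i => //; rewrite mem_iota; lia.
- by apply/orP; right; apply/orP; right; apply/mapP; exists j => //; rewrite mem_iota; lia.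
Qed.

Hypothesis params : classA_params m al de ep xi.

Lemma classA_set_edges : edge_set (classA_set m k al de ep xi).
Proof.
have [[sum_le _ _ ep_bd xi_bd] _] := params.
move=> e; rewrite /classA_set inE !mem_cat => /orP[|/orP[]] /mapP[j]; rewrite mem_iota => j_in ->.
- by apply: seg_card; lia.
- by apply: seg_card; have := ep_bd j ltac:(lia); lia.
- by apply: seg_card; have := xi_bd j ltac:(lia); lia.
Qed.

Lemma classA_set_card : (#|classA_set m k al de ep xi| <= m)%N.
Proof.
have [[sum_le _ _ _ _] _] := params.
rewrite /classA_set cardsE (leq_trans (card_size _)) //.
by rewrite !size_cat !size_map !size_iota; lia.
Qed.

Lemma classA_set_hits : hits_all_SHP (classA_set m k al de ep xi).
Proof.
move=> p shp; have [P [lo [hi [walk res]]]] := SHP_arc_walk shp.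
have p_size : size p = (2 * m - 2).+1 by case/and3P: shp => _ /eqP.
rewrite (_ : (2 * m - 2).+1 = (2 * m - 1)%N) in walk; last by lia.
have [/existsP[e /andP[e_p e_B]]|none] :=
  boolP [exists e, (e \in path_edges p) && (e \in classA_set m k al de ep xi)].
  by exists e.
exfalso; apply: (arc_walk_meets_classA m_ge2 params (arc_walk_shift (- k) walk)) => t t_lt chord.
move/negP: none; apply; apply/existsP; exists [set nth ord0 p t; nth ord0 p t.+1].
have vertex_at i : (i < 2 * m - 1)%N -> nth ord0 p i = vmod (2 * m - 2) (P i).
  by move=> i_lt; apply: ord_inj; rewrite vmod_val res //; lia.
apply/andP; split.
- rewrite inE; apply/mapP; exists (nth ord0 p t, nth ord0 p t.+1) => //.
  by apply: mem_zip_behead; rewrite p_size; lia.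
- by rewrite !vertex_at ?(ltnW t_lt) //; apply: classA_chord_mem.
Qed.

End ClassASet.

Lemma classA_params_exist m (B : {set {set 'I_(2 * m - 2).+1}}) : classA B ->
  exists k al de ep xi, classA_params m al de ep xi /\ B = classA_set m k al de ep xi.
Proof.
move=> [k [al [de [ep [xi [[sum_le ep_dec xi_dec] [ep_bd xi_bd ep_xi ->]]]]]]].
exists k, al, de, ep, xi; split => //; split => //; split => //.
- by move=> i /andP[]; apply: ep_dec.
- by move=> j /andP[]; apply: xi_dec.
- by move=> i /ep_bd[]; lia.
- by move=> j /xi_bd[]; lia.
Qed.

Local Close Scope ring_scope.

Theorem theorem1 (m : nat) (hm : (2 <= m)%N) (B : {set {set 'I_(2 * m - 2).+1}}) :
  classA B -> blocker B.
Proof.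
move=> /classA_params_exist[k [al [de [ep [xi [params ->]]]]]]; split.
- exact: classA_set_edges params.
- exact: classA_set_hits params.
- move=> B' _ /(SHP_hitting_set_card (m := m) ltac:(lia)).
  by apply: leq_trans; apply: classA_set_card.
Qed.
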